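(* Let $G$ be a finite simple connected well-dominated graph of order at least $2$ that has an isolatable vertex. Then the Cartesian product $G \,\square\, H$ is not well-dominated for any finite simple connected graph $H$ of order at least $2$.
   Context: A vertex $x$ of $G$ is isolatable if there is an independent set $I$ in $G$ such that $x$ is an isolated vertex of the induced subgraph $G-N[I]$, where $N[I]$ is the closed neighborhood of $I$. A graph is well-dominated if every minimal (with respect to inclusion) dominating set is a minimum dominating set. The Cartesian product $G\,\square\, H$ has vertex set $V(G)\times V(H)$, with $(g_1,h_1)$ adjacent to $(g_2,h_2)$ iff either ($g_1=g_2$ and $h_1h_2\in E(H)$) or ($h_1=h_2$ and $g_1g_2\in E(G)$). *)

From mathcomp Require Import all_boot.
Set Implicit Arguments. Unset Strict Implicit. Unset Printing Implicit Defensive.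

Definition simple_graph (T : finType) (e : rel T) : Prop :=
  symmetric e /\ irreflexive e.

Definition connected_graph (T : finType) (e : rel T) : Prop :=
  forall x y : T, connect e x y.

Definition cnbhd (T : finType) (e : rel T) (S : {set T}) : {set T} :=
  [set y | (y \in S) || [exists x in S, e x y]].

Definition dominating (T : finType) (e : rel T) (D : {set T}) : Prop :=
  cnbhd e D = [set: T].

Definition minimal_dominating (T : finType) (e : rel T) (D : {set T}) : Prop :=
  dominating e D /\ forall D' : {set T}, D' \proper D -> ~ dominating e D'.

Definition minimum_dominating (T : finType) (e : rel T) (D : {set T}) : Prop :=
  dominating e D /\ forall D' : {set T}, dominating e D' -> #|D| <= #|D'|.

Definition well_dominated (T : finType) (e : rel T) : Prop :=
  forall D : {set T}, minimal_dominating e D -> minimum_dominating e D.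

Definition independent (T : finType) (e : rel T) (I : {set T}) : Prop :=
  forall x y, x \in I -> y \in I -> ~~ e x y.

(* x is an isolated vertex of G - N[I] *)
Definition isolatable (T : finType) (e : rel T) (x : T) : Prop :=
  exists I : {set T}, independent e I /\ x \notin cnbhd e I /\
    forall y, e x y -> y \in cnbhd e I.

Definition cart_prod (T1 T2 : finType) (e1 : rel T1) (e2 : rel T2)
  : rel (T1 * T2) :=
  fun u v => ((u.1 == v.1) && e2 u.2 v.2) || ((u.2 == v.2) && e1 u.1 v.1).

(* Let gamma be the domination number of G.  By Bollobas-Cockayne, G has a
   minimum dominating set D in which every vertex has an external private
   neighbour, and then D x V(H) is a minimal dominating set of G □ H of size
   gamma |H|.  If x is isolated in G - N[I], a minimal dominating set M of G
   inside I u (V - N[I]) contains I and x, and M - x dominates every vertex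
   except x; as G is well-dominated, |M| = gamma.  Then (M - x) x V(H) together
   with {x} x (V(H) - h0) dominates G □ H with gamma |H| - 1 vertices, so the
   minimal dominating set D x V(H) is not minimum. *)

From mathcomp Require Import all_boot zify.
Set Implicit Arguments. Unset Strict Implicit. Unset Printing Implicit Defensive.

Section Domination.

Variables (T : finType) (e : rel T).
Implicit Types (A B D S : {set T}) (x y : T).

Lemma cnbhdP S y :
  reflect (y \in S \/ exists2 x, x \in S & e x y) (y \in cnbhd e S).
Proof.
rewrite inE; apply: (iffP orP) => [[-> | /existsP[x /andP[xS exy]]] | [-> | [x xS exy]]].
- by left.
- by right; exists x.
- by left.
- by right; apply/existsP; exists x; rewrite xS.
Qed.

Lemma dominatingP D : dominating e D <-> forall y, y \in cnbhd e D.
Proof.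
split=> [domD y | domD]; first by rewrite domD inE.
by apply/setP => y; rewrite domD inE.
Qed.

Lemma cnbhdS A B : A \subset B -> cnbhd e A \subset cnbhd e B.
Proof.
move=> AB; apply/subsetP => y /cnbhdP[yA | [x xA exy]]; apply/cnbhdP.
  by left; apply: (subsetP AB).
by right; exists x; first exact: (subsetP AB).
Qed.

Lemma connected_exists_nbr :
  connected_graph e -> 1 < #|T| -> forall x, exists y, e x y.
Proof.
move=> conn T_gt1 x.
have /card_gt0P[y yNx] : 0 < #|[set~ x]| by rewrite cardsC1; lia.
have /connectP[[| z p] /=] := conn x y; last by case/andP=> exz _ _; exists z.
by move=> _ yx; rewrite in_setC1 yx eqxx in yNx.
Qed.

Lemma dominating_setU_setC_cnbhd S : dominating e (S :|: ~: cnbhd e S).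
Proof.
apply/dominatingP => y; apply/cnbhdP.
have [/cnbhdP[yS | [x xS exy]] | yNS] := boolP (y \in cnbhd e S).
- by left; rewrite inE yS.
- by right; exists x; rewrite // inE xS.
- by left; rewrite in_setU in_setC yNS orbT.
Qed.

Lemma exists_minimal_dominating_sub W :
  dominating e W -> exists2 M : {set T}, M \subset W & minimal_dominating e M.
Proof.
move=> /eqP domW.
have [M /minsetP[/eqP domM minM] MW] :=
  @minset_exists _ [pred D | cnbhd e D == setT] W domW.
exists M => //; split=> [// | D' D'M /eqP domD'].
by move: (D'M); rewrite (minM D' domD' (proper_sub D'M)) properxx.
Qed.

Lemma exists_minimum_dominating : exists D, minimum_dominating e D.
Proof.
have domT : cnbhd e setT == setT by apply/eqP/dominatingP => y; apply/cnbhdP; left.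
case: (@arg_minnP _ setT [pred D | cnbhd e D == setT] (fun D => #|D|) domT).
move=> D /eqP domD minD; exists D; split=> // D' /eqP; exact: minD.
Qed.

Definition ext_private_nbr D x y : bool :=
  [&& y \notin D, e x y & [forall x' in D, e x' y ==> (x' == x)]].

Lemma cnbhd_setD1_no_ext_private_nbr D d y :
  dominating e D -> ~~ [exists y, ext_private_nbr D d y] -> y != d ->
  y \in cnbhd e (D :\ d).
Proof.
move=> /dominatingP domD noPN yNd; apply/cnbhdP.
have [yD | yND] := boolP (y \in D); first by left; rewrite !inE yNd.
have /cnbhdP[yD | [x xD exy]] := domD y; first by rewrite yD in yND.
have [xd | xNd] := eqVneq x d; last by right; exists x; rewrite // !inE xNd.
move/existsPn/(_ y): noPN; rewrite /ext_private_nbr yND -xd exy /=.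
case/forallPn => x'; rewrite !negb_imply => /and3P[x'D ex'y x'Nx].
by right; exists x'; rewrite // !inE x'Nx.
Qed.

Definition nonisolated_in D : {set T} := [set u in D | [exists v in D, e u v]].

Section PrivateNeighbours.

Hypotheses (esym : symmetric e) (eirr : irreflexive e).

Section Swap.

Variables (D : {set T}) (d w : T).
Hypotheses (domD : dominating e D) (dD : d \in D).
Hypothesis noPN : ~~ [exists y, ext_private_nbr D d y].
Hypothesis dNcnbhd : d \notin cnbhd e (D :\ d).
Hypothesis edw : e d w.

Lemma swap_nonadj v : v \in D -> ~~ e d v.
Proof.
move=> vD; apply: contra dNcnbhd => edv; apply/cnbhdP; right; exists v.
  by rewrite !inE vD andbT; apply: contraTneq edv => ->; rewrite eirr.
by rewrite esym.
Qed.

Lemma swap_nbr_notin : w \notin D.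
Proof. by apply: contraL edw; apply: swap_nonadj. Qed.

Lemma swap_dominating : dominating e (w |: D :\ d).
Proof.
apply/dominatingP => y; apply/cnbhdP.
have [-> | yNd] := eqVneq y d; first by right; exists w; rewrite ?setU11 // esym.
have /cnbhdP[yD | [x xD exy]] := cnbhd_setD1_no_ext_private_nbr domD noPN yNd.
  by left; rewrite setU1r.
by right; exists x; rewrite ?setU1r.
Qed.

Lemma swap_card : #|w |: D :\ d| = #|D|.
Proof.
rewrite cardsU1 !inE negb_and swap_nbr_notin orbT (cardsD1 d D) dD.
by rewrite add1n.
Qed.

Lemma swap_nonisolated_in :
  #|nonisolated_in D| < #|nonisolated_in (w |: D :\ d)|.
Proof.
apply: proper_card; apply/properP; split.
  apply/subsetP => u /setIdP[uD /existsP[v /andP[vD euv]]].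
  have uNd : u != d by apply: contraTneq euv => ->; rewrite swap_nonadj.
  have vNd : v != d by apply: contraTneq euv => ->; rewrite esym swap_nonadj.
  rewrite !inE uNd uD orbT /=; apply/existsP; exists v.
  by rewrite !inE vNd vD orbT.
have wNd : w != d by apply: contraTneq edw => ->; rewrite eirr.
have /cnbhdP[wD | [x' x'D ex'w]] := cnbhd_setD1_no_ext_private_nbr domD noPN wNd.
  by move: wD; rewrite in_setD1 (negbTE swap_nbr_notin) andbF.
exists w; last by rewrite inE (negbTE swap_nbr_notin).
rewrite !inE eqxx /=; apply/existsP; exists x'.
by rewrite setU1r // esym.
Qed.

End Swap.

(* Bollobas-Cockayne: among minimum dominating sets take one maximising
   [#|nonisolated_in D|]; a vertex without an external private neighbour could
   then be deleted (if it has a neighbour in D) or swapped for a neighbour. *)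
Lemma exists_minimum_dominating_ext_private_nbr :
  (forall x, exists y, e x y) ->
  exists D, minimum_dominating e D /\
    forall d, d \in D -> exists y, ext_private_nbr D d y.
Proof.
move=> nbr; have [D0 [domD0 minD0]] := exists_minimum_dominating.
pose gamma_set D := (cnbhd e D == setT) && (#|D| == #|D0|).
have gammaD0 : gamma_set D0 by rewrite /gamma_set eqxx andbT; apply/eqP.
have [D /andP[/eqP domD /eqP cardD] maxD] :=
  @arg_maxnP _ D0 gamma_set (fun D => #|nonisolated_in D|) gammaD0.
have minD : minimum_dominating e D by split=> // D' /minD0; rewrite cardD.
exists D; split=> // d dD; apply/existsP; apply: contraT => noPN.
have [dcnbhd | dNcnbhd] := boolP (d \in cnbhd e (D :\ d)).
  have domDd : dominating e (D :\ d).
    apply/dominatingP => y; have [-> // | yNd] := eqVneq y d.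
    exact: cnbhd_setD1_no_ext_private_nbr.
  by have := minD.2 _ domDd; rewrite (cardsD1 d D) dD add1n ltnn.
have [w edw] := nbr d.
have : gamma_set (w |: D :\ d).
  rewrite /gamma_set (swap_card dD dNcnbhd edw) cardD eqxx andbT.
  by apply/eqP; apply: swap_dominating domD noPN edw.
move/maxD; have := swap_nonisolated_in domD noPN dNcnbhd edw; lia.
Qed.

End PrivateNeighbours.
End Domination.

Section Isolatable.

Variables (T : finType) (e : rel T) (I : {set T}).
Hypotheses (esym : symmetric e) (Iind : independent e I).
Implicit Types (D M S : {set T}).

Lemma independent_nonadj_setU_setC_cnbhd m y :
  m \in I :|: ~: cnbhd e I -> y \in I -> ~~ e m y.
Proof.
rewrite in_setU in_setC => /orP[mI | mNcnbhd] yI; first exact: Iind.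
by apply: contra mNcnbhd => emy; apply/cnbhdP; right; exists y; rewrite // esym.
Qed.

Lemma independent_sub_dominating M :
  M \subset I :|: ~: cnbhd e I -> dominating e M -> I \subset M.
Proof.
move=> MW /dominatingP domM; apply/subsetP => a aI.
have /cnbhdP[// | [m mM ema]] := domM a.
by have := independent_nonadj_setU_setC_cnbhd (subsetP MW m mM) aI; rewrite ema.
Qed.

Lemma isolatable_punctured_dominating x :
  well_dominated e -> x \notin cnbhd e I -> (forall y, e x y -> y \in cnbhd e I) ->
  exists S, (forall D, dominating e D -> #|S| < #|D|) /\
    forall u, u != x -> u \in cnbhd e S.
Proof.
move=> wd xN xnbr.
have [M MW minM] := exists_minimal_dominating_sub (dominating_setU_setC_cnbhd e I).
have [domM gammaM] := wd M minM.
have IM := independent_sub_dominating MW domM.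
have xM : x \in M.
  have /dominatingP/(_ x)/cnbhdP[// | [m mM emx]] := domM.
  have mcnbhd : m \in cnbhd e I by apply: xnbr; rewrite esym.
  have mI : m \in I.
    by have := subsetP MW m mM; rewrite in_setU in_setC mcnbhd orbF.
  suff : x \in cnbhd e I by rewrite (negbTE xN).
  by apply/cnbhdP; right; exists m.
exists (M :\ x); split.
  by move=> D /gammaM; rewrite (cardsD1 x M) xM.
move=> u uNx; apply/cnbhdP.
have /dominatingP/(_ u)/cnbhdP[uM | [m mM emu]] := domM.
  by left; rewrite in_setD1 uNx.
have [mx | mNx] := eqVneq m x; last by right; exists m; rewrite // in_setD1 mNx.
have /xnbr/cnbhdP[uI | [a aI eau]] : e x u by rewrite -mx.
  by left; rewrite in_setD1 uNx (subsetP IM).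
right; exists a => //; rewrite in_setD1 (subsetP IM) // andbT.
by apply: contraNneq xN => ax; apply/cnbhdP; left; rewrite -ax.
Qed.

End Isolatable.

Section CartesianProduct.

Variables (T1 T2 : finType) (e1 : rel T1) (e2 : rel T2).
Notation G := (cart_prod e1 e2).
Implicit Types (D S : {set T1}).

Lemma cnbhd_setX_setT D u h :
  u \in cnbhd e1 D -> (u, h) \in cnbhd G (setX D [set: T2]).
Proof.
case/cnbhdP=> [uD | [m mD emu]]; apply/cnbhdP.
  by left; rewrite in_setX uD in_setT.
by right; exists (m, h); rewrite ?in_setX ?mD ?in_setT // /cart_prod /= eqxx emu orbT.
Qed.

Lemma dominating_setX_setT D :
  dominating e1 D -> dominating G (setX D [set: T2]).
Proof.
by move=> /dominatingP domD; apply/dominatingP => -[u h]; apply: cnbhd_setX_setT.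
Qed.

Lemma minimal_dominating_setX_setT D :
  dominating e1 D -> (forall d, d \in D -> exists y, ext_private_nbr e1 D d y) ->
  minimal_dominating G (setX D [set: T2]).
Proof.
move=> domD pnD; split; first exact: dominating_setX_setT.
move=> D' /properP[D'sub [[d h] dhD dhND']] /dominatingP domD'.
have dD : d \in D by move: dhD; rewrite in_setX => /andP[].
have [y /and3P[yND edy /forall_inP pn]] := pnD d dD.
have /cnbhdP[yhD' | [[m k] mkD' emk]] := domD' (y, h).
  by move: (subsetP D'sub _ yhD'); rewrite in_setX (negbTE yND).
have mD : m \in D by move: (subsetP D'sub _ mkD'); rewrite in_setX => /andP[].
case/orP: emk => /andP[/eqP /= my emy]; first by rewrite -my mD in yND.
have /eqP md := implyP (pn m mD) emy.
by rewrite -md -my mkD' in dhND'.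
Qed.

Lemma dominating_setX_punctured S x h0 k :
  irreflexive e2 -> (forall u, u != x -> u \in cnbhd e1 S) -> e2 k h0 ->
  dominating G (setX S [set: T2] :|: setX [set x] [set~ h0]).
Proof.
move=> irr2 domS ekh; apply/dominatingP => -[u h].
have [-> | uNx] := eqVneq u x; last first.
  by apply: (subsetP (cnbhdS _ (subsetUl _ _))); apply: cnbhd_setX_setT; apply: domS.
apply/cnbhdP; have [-> | hNh0] := eqVneq h h0; last first.
  by left; rewrite in_setU !in_setX in_set1 in_setC1 eqxx hNh0 orbT.
right; exists (x, k); last by rewrite /cart_prod /= eqxx ekh.
rewrite in_setU !in_setX in_set1 in_setC1 eqxx /=; apply/orP; right.
by apply: contraTneq ekh => ->; rewrite irr2.
Qed.

Lemma cart_prod_not_well_dominated D S x h0 k :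
  irreflexive e2 -> dominating e1 D ->
  (forall d, d \in D -> exists y, ext_private_nbr e1 D d y) ->
  #|S| < #|D| -> (forall u, u != x -> u \in cnbhd e1 S) -> e2 k h0 ->
  ~ well_dominated G.
Proof.
move=> irr2 domD pnD ltSD domS ekh wd.
have [_ minX] := wd _ (minimal_dominating_setX_setT domD pnD).
have := minX _ (dominating_setX_punctured irr2 domS ekh).
have := (leq_card_setU (setX S [set: T2]) (setX [set x] [set~ h0])).1.
rewrite !cardsX cards1 cardsC1 cardsT mul1n.
have n_gt0 : 0 < #|T2| by apply/card_gt0P; exists h0.
have := leq_mul ltSD (leqnn #|T2|); nia.
Qed.

End CartesianProduct.

Theorem corollary19 (T1 : finType) (e1 : rel T1) :
  simple_graph e1 -> connected_graph e1 -> 1 < #|T1| ->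
  well_dominated e1 -> (exists x : T1, isolatable e1 x) ->
  forall (T2 : finType) (e2 : rel T2),
    simple_graph e2 -> connected_graph e2 -> 1 < #|T2| ->
    ~ well_dominated (cart_prod e1 e2).
Proof.
move=> [sym1 irr1] conn1 T1_gt1 wd1 [x [I [Iind [xN xnbr]]]] T2 e2 [sym2 irr2] conn2 T2_gt1.
have [S [ltSD domS]] := isolatable_punctured_dominating sym1 Iind wd1 xN xnbr.
have [D [[domD _] pnD]] :=
  exists_minimum_dominating_ext_private_nbr sym1 irr1 (connected_exists_nbr conn1 T1_gt1).
have /card_gt0P[h0 _] : 0 < #|T2| by apply: ltnW.
have [k ehk] := connected_exists_nbr conn2 T2_gt1 h0.
have ekh : e2 k h0 by rewrite sym2.
exact: cart_prod_not_well_dominated irr2 domD pnD (ltSD D domD) domS ekh.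
Qed.
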